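(* Let $\Gamma$ be a graph and let $K$ be a finite graph. (1) If $\Gamma$ contains a finite set of vertices $X$ such that every subgraph of $\Gamma$ isomorphic to $K$ has at least one vertex in $X$, then $\Gamma$ contains a finite set of vertices $Y$, invariant under all automorphisms of $\Gamma$, such that every subgraph of $\Gamma$ isomorphic to $K$ has at least one vertex in $Y$, and $|Y|\le |X|\cdot(\text{number of vertices of }K)$. (2) If $\Gamma$ contains a finite set of edges $X$ such that every subgraph of $\Gamma$ isomorphic to $K$ has at least one edge in $X$, then $\Gamma$ contains a finite set of edges $Y$, invariant under all automorphisms of $\Gamma$, such that every subgraph of $\Gamma$ isomorphic to $K$ has at least one edge in $Y$, and $|Y|\le |X|\cdot(\text{number of edges of }K)$.
   Context: ''Graph'' may be understood in any of the usual senses (directed, undirected, or mixed; multiple edges and/or loops allowed or not), fixed throughout; isomorphisms and automorphisms preserve the corresponding structure (e.g. edge directions for directed graphs). ''Subgraph'' means an arbitrary (not necessarily induced) subgraph. $\Gamma$ may be infinite. *)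

From mathcomp Require Import all_boot.
From Stdlib Require List.
Set Implicit Arguments. Unset Strict Implicit. Unset Printing Implicit Defensive.

(* Convention fixed throughout: a graph is a directed multigraph with loops:
   a vertex type, an edge type, and source/target maps. *)
Record graph := Graph { gV : Type; gE : Type; gsrc : gE -> gV; gtgt : gE -> gV }.

Record fingraph := FinGraph { fV : finType; fE : finType;
                              fsrc : fE -> fV; ftgt : fE -> fV }.

Definition is_subgraph (G : graph) (VS : gV G -> Prop) (ES : gE G -> Prop) : Prop :=
  forall e, ES e -> VS (gsrc e) /\ VS (gtgt e).

Definition iso_to_subgraph (K : fingraph) (G : graph)
    (VS : gV G -> Prop) (ES : gE G -> Prop) : Prop :=
  exists (f : fV K -> gV G) (g : fE K -> gE G),
    injective f /\ (forall v, VS (f v)) /\ (forall x, VS x -> exists v, f v = x) /\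
    injective g /\ (forall e, ES (g e)) /\ (forall y, ES y -> exists e, g e = y) /\
    (forall e, gsrc (g e) = f (fsrc e) /\ gtgt (g e) = f (ftgt e)).

Definition automorphism (G : graph) (phi : gV G -> gV G) (psi : gE G -> gE G) : Prop :=
  bijective phi /\ bijective psi /\
  forall e, gsrc (psi e) = phi (gsrc e) /\ gtgt (psi e) = phi (gtgt e).

(* Finite sets are represented by duplicate-free lists; |X| = size X. *)

Definition vertex_hitting (K : fingraph) (G : graph) (X : seq (gV G)) : Prop :=
  forall VS ES, is_subgraph VS ES -> iso_to_subgraph K VS ES ->
    exists x, List.In x X /\ VS x.

Definition edge_hitting (K : fingraph) (G : graph) (X : seq (gE G)) : Prop :=
  forall VS ES, is_subgraph VS ES -> iso_to_subgraph K VS ES ->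
    exists e, List.In e X /\ ES e.

Definition vertex_aut_invariant (G : graph) (Y : seq (gV G)) : Prop :=
  forall phi psi, automorphism phi psi ->
    forall x, List.In x Y <-> List.In (phi x) Y.

Definition edge_aut_invariant (G : graph) (Y : seq (gE G)) : Prop :=
  forall phi psi, automorphism phi psi ->
    forall e, List.In e Y <-> List.In (psi e) Y.

From mathcomp Require Import all_boot finmap boolp.
From Stdlib Require List.

Set Implicit Arguments.
Unset Strict Implicit.
Unset Printing Implicit Defensive.

Local Open Scope fset_scope.

(* Let X be a finite transversal of the copies of K (their vertex sets, resp. edge sets, of
   size at most r). Minimum transversals M exist, have size tau <= |X|, and there are only
   finitely many of them: all those through a vertex v of a fixed copy e consist of v and a
   minimum transversal of the copies avoiding v, whose size is tau - 1, so induction on tau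
   confines them to a finite set. Let m be their number and d(x) the number of them
   containing x, and take Y = {x | m <= r d(x)}. Automorphisms permute the minimum
   transversals, hence preserve d and Y. Every copy e is hit by all m minimum transversals,
   so sum_(x in e) d(x) >= m and some x in e lies in Y. Double counting gives
   m |Y| <= r sum_x d(x) = r m tau, i.e. |Y| <= r tau <= r |X|. *)

Lemma mem_imfset_can (T : choiceType) (f g : T -> T) (A : {fset T}) x :
  cancel f g -> cancel g f -> (x \in f @` A) = (g x \in A).
Proof. by move=> fK gK; rewrite -{1}[x]gK mem_imfset //; exact: can_inj fK. Qed.

Lemma imfsetK (T : choiceType) (f g : T -> T) :
  cancel f g -> cancel (fun A : {fset T} => f @` A) (fun A => g @` A).
Proof.
move=> fK A; rewrite -imfset_comp -[RHS]imfset_id.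
exact: eq_imfset.
Qed.

Section Transversals.
Variables (T : choiceType) (P : {fset T} -> Prop).

Definition transversal (X : {fset T}) := forall e, P e -> exists2 x, x \in X & x \in e.

Definition min_transversal (M : {fset T}) :=
  transversal M /\ forall X, transversal X -> #|`M| <= #|`X|.

Lemma exists_min_transversal X : transversal X -> exists M, min_transversal M.
Proof.
move=> tX; pose sizes k := `[< exists2 Y, transversal Y & #|`Y| = k >].
have: exists k, sizes k by exists #|`X|; apply/asboolP; exists X.
case/ex_minnP => _ /asboolP [M tM <-] minM; exists M; split => // Y tY.
by apply: minM; apply/asboolP; exists Y.
Qed.

Lemma min_transversal_eq0 Z M :
  transversal Z -> #|`Z| = 0 -> min_transversal M -> M = fset0.
Proof. by move=> tZ Z0 [_ /(_ Z tZ)]; rewrite Z0 leqn0 => /eqP/cardfs0_eq. Qed.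

Definition symmetry (phi phi' : T -> T) :=
  [/\ cancel phi phi', cancel phi' phi,
      forall e, P e -> P (phi @` e) & forall e, P e -> P (phi' @` e)].

Lemma symmetry_inv phi phi' : symmetry phi phi' -> symmetry phi' phi.
Proof. by case. Qed.

Lemma transversal_imfset phi phi' X :
  symmetry phi phi' -> transversal X -> transversal (phi @` X).
Proof.
move=> [phiK phiK' _ Pphi'] tX e /Pphi'/tX [x xX].
rewrite (mem_imfset_can _ _ phiK' phiK) => xe.
by exists (phi x); rewrite ?in_imfset // (mem_imfset_can _ _ phiK phiK').
Qed.

Lemma min_transversal_imfset phi phi' M :
  symmetry phi phi' -> min_transversal M -> min_transversal (phi @` M).
Proof.
move=> s [tM minM]; have [phiK _ _ _] := s.
split=> [|X tX]; first exact: transversal_imfset s tM.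
rewrite card_imfset; last exact: can_inj phiK.
apply: leq_trans (minM _ (transversal_imfset (symmetry_inv s) tX)) _.
exact: leq_imfset_card.
Qed.

End Transversals.

Lemma min_transversalD1 (T : choiceType) (P : {fset T} -> Prop) M v :
  min_transversal P M -> v \in M ->
  min_transversal (fun e => P e /\ v \notin e) (M `\ v).
Proof.
move=> [tM minM] vM; split=> [e [/tM [x xM xe] ve] | X tX].
  by exists x => //; rewrite in_fsetD1 xM andbT; apply: contraNneq ve => <-.
have tvX : transversal P (v |` X).
  move=> e Pe; have [ve | nve] := boolP (v \in e); first by exists v; rewrite ?fset1U1.
  by have [x xX xe] := tX e (conj Pe nve); exists x; rewrite ?fset1Ur.
have := minM _ tvX; rewrite (cardfsD1 v M) vM cardfsU1.
by move=> /leq_trans/(_ (leq_add (leq_b1 _) (leqnn _))); rewrite leq_add2l.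
Qed.

Lemma min_transversals_bounded (T : choiceType) k (P : {fset T} -> Prop) X :
  #|`X| <= k -> transversal P X ->
  exists L : {fset T}, forall M, min_transversal P M -> M `<=` L.
Proof.
elim: k P X => [|k IH] P X sX tX.
  by exists fset0 => M /(min_transversal_eq0 tX); rewrite leqn0 in sX => /(_ (eqP sX)) ->.
have [[e Pe] | noP] := pselect (exists e, P e); last first.
  have t0 : transversal P fset0 by move=> e Pe; case: noP; exists e.
  by exists fset0 => M /(min_transversal_eq0 t0) -> //; rewrite cardfs0.
have through v : exists Lv : {fset T},
    forall M, min_transversal P M -> v \in M -> M `<=` v |` Lv.
  have [[M0 minM0 vM0] | none] := pselect (exists2 M, min_transversal P M & v \in M);
    last by exists fset0 => M minM vM; case: none; exists M.
  have [|Lv HLv] := IH _ _ _ (min_transversalD1 minM0 vM0).1.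
    rewrite -ltnS (leq_trans _ (leq_trans (minM0.2 X tX) sX)) //.
    by rewrite (cardfsD1 v M0) vM0.
  exists Lv => M minM vM; rewrite -(fsetD1K vM) fsetUS //.
  exact: HLv _ (min_transversalD1 minM vM).
have [Lv HLv] := choice through.
exists (\bigcup_(v <- e) (v |` Lv v)) => M minM.
have [v vM ve] := minM.1 e Pe.
exact: fsubset_trans (HLv v M minM vM) (bigfcup_sup _ ve isT).
Qed.

Lemma sum_nat_const_seq (T : Type) (s : seq T) c : \sum_(x <- s) c = c * size s.
Proof. by rewrite big_const_seq count_predT iter_addn_0. Qed.

Lemma sum_mem_leq (T : eqType) (s t : seq T) :
  uniq s -> \sum_(x <- s) (x \in t) <= size t.
Proof.
move=> us; have -> : \sum_(x <- s) (x \in t) = \sum_(x <- s | x \in t) 1.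
  by rewrite [RHS]big_mkcond; apply: eq_bigr => x _; case: (x \in t).
rewrite sum1_count -size_filter uniq_leq_size ?filter_uniq // => x.
by rewrite mem_filter => /andP[].
Qed.

Section HeavyElements.
Variables (T : choiceType) (Ms : {fset {fset T}}) (r : nat).
Hypothesis Ms_gt0 : 0 < #|`Ms|.

Definition degree x := \sum_(M <- Ms) (x \in M).

Definition heavy := [fset x in \bigcup_(M <- Ms) M | #|`Ms| <= r * degree x].

Lemma mem_heavy x : (x \in heavy) = (#|`Ms| <= r * degree x).
Proof.
rewrite in_fset inE andb_idl // => /(leq_trans Ms_gt0); rewrite muln_gt0 => /andP[_].
rewrite lt0n sum_nat_seq_neq0 => /hasP[M MMs]; rewrite eqb0 negbK => xM.
by apply/bigfcupP; exists M; rewrite ?MMs.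
Qed.

Lemma card_heavy t : (forall M, M \in Ms -> #|`M| <= t) -> #|`heavy| <= t * r.
Proof.
move=> small; rewrite -(leq_pmul2l Ms_gt0) -sum_nat_const_seq.
apply: (@leq_trans (\sum_(x <- heavy) r * degree x)).
  by rewrite !big_seq; apply: leq_sum => x; rewrite mem_heavy.
rewrite -big_distrr /= /degree exchange_big /= [t * r]mulnC mulnCA leq_mul2l.
apply/orP; right; rewrite mulnC -sum_nat_const_seq !big_seq; apply: leq_sum => M /small.
exact/(leq_trans (sum_mem_leq _ (fset_uniq _))).
Qed.

Lemma heavy_meets e : #|`e| <= r -> (forall M, M \in Ms -> exists2 x, x \in M & x \in e) ->
  exists2 x, x \in heavy & x \in e.
Proof.
move=> er hitM.
have [/hasP[x xe xh] | /hasPn light] := boolP (has (fun x => x \in heavy) e).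
  by exists x.
have covered : #|`Ms| <= \sum_(x <- e) degree x.
  rewrite /degree exchange_big /= -sum1_size !big_seq; apply: leq_sum => M /hitM[x xM xe].
  by rewrite lt0n sum_nat_seq_neq0; apply/hasP; exists x; rewrite ?xM.
have r_gt0 : 0 < r.
  have /fset0Pn[M /hitM[x _ xe]] : Ms != fset0 by rewrite -cardfs_gt0.
  by apply: leq_trans er; rewrite cardfs_gt0; apply/fset0Pn; exists x.
suff : #|`Ms| * r <= #|`Ms|.-1 * r by rewrite leq_pmul2r // leqNgt ltn_predL Ms_gt0.
apply: leq_trans (leq_mul covered (leqnn r)) (leq_trans _ (leq_mul (leqnn _) er)).
rewrite big_distrl /= -sum_nat_const_seq !big_seq; apply: leq_sum => x /light.
by rewrite mem_heavy -ltnNge mulnC => ?; rewrite -ltnS prednK.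
Qed.

Lemma degree_imfset phi phi' x :
  cancel phi phi' -> cancel phi' phi ->
  (forall M, M \in Ms -> phi @` M \in Ms) -> (forall M, M \in Ms -> phi' @` M \in Ms) ->
  degree (phi x) = degree x.
Proof.
move=> phiK phiK' closed closed'.
have MsE : Ms = (fun M : {fset T} => phi @` M) @` Ms.
  apply/fsetP => M; rewrite (mem_imfset_can _ _ (imfsetK phiK) (imfsetK phiK')).
  by apply/idP/idP => [/closed' | /closed]; rewrite ?(imfsetK phiK').
rewrite /degree {1}MsE big_imfset /=; last exact: in2W (can_inj (imfsetK phiK)).
by apply: eq_bigr => M _; rewrite mem_imfset //; exact: can_inj phiK.
Qed.

End HeavyElements.

Theorem invariant_transversal (T : choiceType) (P : {fset T} -> Prop) r X :
  (forall e, P e -> #|`e| <= r) -> transversal P X ->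
  exists Y, [/\ transversal P Y, #|`Y| <= #|`X| * r &
    forall phi phi', symmetry P phi phi' -> forall x, (phi x \in Y) = (x \in Y)].
Proof.
move=> Pr tX; have [L HL] := min_transversals_bounded (leqnn _) tX.
pose Ms := [fset M in fpowerset L | `[< min_transversal P M >]].
have MsE M : M \in Ms = `[< min_transversal P M >].
  by rewrite !inE fpowersetE andb_idl // => /asboolP/HL.
have [M0 minM0] := exists_min_transversal tX.
have Ms_gt0 : 0 < #|`Ms|.
  by rewrite cardfs_gt0; apply/fset0Pn; exists M0; rewrite MsE; apply/asboolP.
exists (heavy Ms r); split.
- move=> e Pe; apply: heavy_meets => // [|M]; first exact: Pr.
  by rewrite MsE => /asboolP[tM _]; exact: tM.
- by apply: card_heavy => // M; rewrite MsE => /asboolP[_]; apply.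
- move=> phi phi' s x; rewrite !mem_heavy //; congr (_ <= _ * _).
  have closed f f' : symmetry P f f' -> forall M, M \in Ms -> f @` M \in Ms.
    by move=> sf M; rewrite !MsE => /asboolP/(min_transversal_imfset sf)/asboolP.
  case: (s) => phiK phiK' _ _; apply: degree_imfset => //; first exact: closed s.
  exact: closed (symmetry_inv s).
Qed.

Lemma InP (T : eqType) (x : T) (s : seq T) : reflect (List.In x s) (x \in s).
Proof.
elim: s => [|y s IH] /=; first by constructor.
rewrite in_cons; apply: (iffP orP) => [[/eqP-> | /IH] | [-> | /IH]];
  by [left | right | left | right].
Qed.

Lemma NoDupP (T : eqType) (s : seq T) : reflect (List.NoDup s) (uniq s).
Proof.
elim: s => [|x s IH] /=; first by do 2 constructor.
apply: (iffP andP) => [[/InP xs /IH us] | nd]; first by constructor.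
by inversion nd; split; [apply/InP | apply/IH].
Qed.

Lemma invariant_hitting_seq (T : Type) (P : {fset {classic T}} -> Prop) r
    (hits : seq {classic T} -> Prop) (aut : (T -> T) -> Prop) :
  (forall X (A : {fset {classic T}}), X =i A -> hits X <-> transversal P A) ->
  (forall e, P e -> #|`e| <= r) ->
  (forall phi, aut phi -> exists phi', symmetry P phi phi') ->
  forall X, List.NoDup X -> hits X ->
  exists Y : seq {classic T},
    [/\ List.NoDup Y,
        forall phi, aut phi -> forall x : {classic T}, List.In x Y <-> List.In (phi x) Y,
        hits Y & size Y <= size X * r].
Proof.
move=> hitsE Pr autS X /NoDupP uX.
have XE : X =i [fset x in X] by move=> x; rewrite inE.
move/(hitsE _ _ XE)/(invariant_transversal Pr) => [Y [tY sY invY]].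
exists Y; split.
- exact/NoDupP/fset_uniq.
- by move=> phi /autS[phi' s] x; rewrite !(rwP (@InP {classic T} _ _)) (invY _ _ s).
- exact/(hitsE _ _ (frefl _)).
- by rewrite card_fseq undup_id in sY.
Qed.

Lemma fset_image (A : finType) (B : choiceType) (f : A -> B) (S : B -> Prop) :
  (forall a, S (f a)) -> (forall b, S b -> exists a, f a = b) ->
  exists s : {fset B}, forall b, S b <-> b \in s.
Proof.
move=> Sf Sim; exists [fset b in map f (enum A)] => b; rewrite inE.
by split=> [/Sim[a <-] | /mapP[a _ ->]]; [exact/map_f/mem_enum | exact: Sf].
Qed.

Lemma card_fset_image (A : finType) (B : choiceType) (f : A -> B) (s : {fset B}) :
  (forall b, b \in s -> exists a, f a = b) -> #|`s| <= #|A|.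
Proof.
move=> sim; rewrite cardE -(size_map f); apply: uniq_leq_size (fset_uniq s) _.
by move=> b /sim[a <-]; exact/map_f/mem_enum.
Qed.

Section Copies.
Variables (G : graph) (K : fingraph).
Local Notation V := {classic (gV G)}.
Local Notation E := {classic (gE G)}.

Definition copy (VS : gV G -> Prop) (ES : gE G -> Prop) :=
  is_subgraph VS ES /\ iso_to_subgraph K VS ES.

Definition copy_vertices (s : {fset V}) :=
  exists VS ES, copy VS ES /\ forall x, VS x <-> x \in s.

Definition copy_edges (s : {fset E}) :=
  exists VS ES, copy VS ES /\ forall y, ES y <-> y \in s.

Lemma card_copy_vertices s : copy_vertices s -> #|`s| <= #|fV K|.
Proof.
case=> VS [ES [[_ [f [g [_ [_ [fS _]]]]]] sE]].
by apply: (@card_fset_image _ V f) => x /sE/fS.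
Qed.

Lemma card_copy_edges s : copy_edges s -> #|`s| <= #|fE K|.
Proof.
case=> VS [ES [[_ [f [g [_ [_ [_ [_ [_ [gS _]]]]]]]]] sE]].
by apply: (@card_fset_image _ E g) => y /sE/gS.
Qed.

Lemma vertex_hittingE (X : seq V) (A : {fset V}) :
  X =i A -> vertex_hitting K X <-> transversal copy_vertices A.
Proof.
move=> XA; split=> [hit s [VS [ES [[sub iso] sE]]] | tA VS ES sub iso].
  by have [x [/(@InP V) xX /sE xs]] := hit VS ES sub iso; exists x; rewrite -?XA.
have [s sE] : exists s : {fset V}, forall x, VS x <-> x \in s.
  by case: iso => f [g [_ [fV [fS _]]]]; exact: (@fset_image _ V f).
have [x xA /sE VSx] := tA s (ex_intro _ VS (ex_intro _ ES (conj (conj sub iso) sE))).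
by exists x; split=> //; apply/(@InP V); rewrite XA.
Qed.

Lemma edge_hittingE (X : seq E) (A : {fset E}) :
  X =i A -> edge_hitting K X <-> transversal copy_edges A.
Proof.
move=> XA; split=> [hit s [VS [ES [[sub iso] sE]]] | tA VS ES sub iso].
  by have [y [/(@InP E) yX /sE ys]] := hit VS ES sub iso; exists y; rewrite -?XA.
have [s sE] : exists s : {fset E}, forall y, ES y <-> y \in s.
  by case: iso => f [g [_ [_ [_ [_ [gE [gS _]]]]]]]; exact: (@fset_image _ E g).
have [y yA /sE ESy] := tA s (ex_intro _ VS (ex_intro _ ES (conj (conj sub iso) sE))).
by exists y; split=> //; apply/(@InP E); rewrite XA.
Qed.

Lemma automorphism_inv (phi : gV G -> gV G) (psi : gE G -> gE G) :
  automorphism phi psi ->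
  exists phi' psi', [/\ automorphism phi' psi', cancel phi phi', cancel phi' phi,
                       cancel psi psi' & cancel psi' psi].
Proof.
case=> [[phi' phiK phiK'] [[psi' psiK psiK'] hom]].
exists phi', psi'; split=> //; split; [by exists phi | split; first by exists psi].
move=> e; have [s t] := hom (psi' e); rewrite psiK' in s t.
by rewrite s t !phiK.
Qed.

Lemma copy_image (phi : gV G -> gV G) (psi : gE G -> gE G) VS ES :
  automorphism phi psi -> copy VS ES ->
  copy (fun x => exists2 y, VS y & x = phi y) (fun e => exists2 e0, ES e0 & e = psi e0).
Proof.
move=> [[phi' phiK _] [[psi' psiK _] hom]] [sub [f [g [fI [fV [fS [gI [gE [gS fg]]]]]]]]].
split.
  move=> _ [e ESe ->]; have [s t] := hom e; have [Ss St] := sub e ESe.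
  by rewrite s t; split; [exists (gsrc e) | exists (gtgt e)].
exists (phi \o f), (psi \o g).
split; first exact: inj_comp (can_inj phiK) fI.
split; first by move=> v; exists (f v).
split; first by move=> _ [y /fS[v <-] ->]; exists v.
split; first exact: inj_comp (can_inj psiK) gI.
split; first by move=> e; exists (g e).
split; first by move=> _ [e0 /gS[e <-] ->]; exists e.
by move=> e /=; have [s t] := hom (g e); have [s' t'] := fg e; rewrite s t s' t'.
Qed.

Lemma copy_vertices_imfset (phi : V -> V) (psi : E -> E) (s : {fset V}) :
  automorphism phi psi -> copy_vertices s -> copy_vertices (phi @` s).
Proof.
move=> A [VS [ES [cp sE]]]; exists (fun x => exists2 y, VS y & x = phi y),
  (fun e => exists2 e0, ES e0 & e = psi e0); split; first exact: copy_image A cp.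
move=> x; split=> [[y /sE ys ->] | /imfsetP[y /= ys ->]]; first exact: in_imfset.
by exists y; rewrite ?sE.
Qed.

Lemma copy_edges_imfset (phi : V -> V) (psi : E -> E) (s : {fset E}) :
  automorphism phi psi -> copy_edges s -> copy_edges (psi @` s).
Proof.
move=> A [VS [ES [cp sE]]]; exists (fun x => exists2 y, VS y & x = phi y),
  (fun e => exists2 e0, ES e0 & e = psi e0); split; first exact: copy_image A cp.
move=> e; split=> [[e0 /sE e0s ->] | /imfsetP[e0 /= e0s ->]]; first exact: in_imfset.
by exists e0; rewrite ?sE.
Qed.

Lemma automorphism_symmetry_vertices (phi : V -> V) (psi : E -> E) :
  automorphism phi psi -> exists phi', symmetry copy_vertices phi phi'.
Proof.
move=> A; have [phi' [psi' [A' phiK phiK' _ _]]] := automorphism_inv A.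
by exists phi'; split=> // s; [exact: copy_vertices_imfset A | exact: copy_vertices_imfset A'].
Qed.

Lemma automorphism_symmetry_edges (phi : V -> V) (psi : E -> E) :
  automorphism phi psi -> exists psi', symmetry copy_edges psi psi'.
Proof.
move=> A; have [phi' [psi' [A' _ _ psiK psiK']]] := automorphism_inv A.
by exists psi'; split=> // s; [exact: copy_edges_imfset A | exact: copy_edges_imfset A'].
Qed.

End Copies.

Theorem corollary1 (G : graph) (K : fingraph) :
  (forall X : seq (gV G), List.NoDup X -> vertex_hitting K X ->
     exists Y : seq (gV G),
       [/\ List.NoDup Y, vertex_aut_invariant Y, vertex_hitting K Y &
           size Y <= size X * #|fV K|]) /\
  (forall X : seq (gE G), List.NoDup X -> edge_hitting K X ->
     exists Y : seq (gE G),
       [/\ List.NoDup Y, edge_aut_invariant Y, edge_hitting K Y &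
           size Y <= size X * #|fE K|]).
Proof.
split=> X uX hX.
- have [|Y [uY invY hY sY]] := invariant_hitting_seq (@vertex_hittingE G K)
    (@card_copy_vertices G K) (aut := fun phi => exists psi, automorphism phi psi) _ uX hX.
    by move=> phi [psi]; exact: automorphism_symmetry_vertices.
  by exists Y; split=> // phi psi A; apply: invY; exists psi.
- have [|Y [uY invY hY sY]] := invariant_hitting_seq (@edge_hittingE G K)
    (@card_copy_edges G K) (aut := fun psi => exists phi, automorphism phi psi) _ uX hX.
    by move=> psi [phi]; exact: automorphism_symmetry_edges.
  by exists Y; split=> // phi psi A; apply: invY; exists phi.
Qed.
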